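(* Let $\mathcal{M}\in\mathbb{R}^{n\times n}$ be a Hurwitz matrix and let $\mu>0$. Let $P$ be the unique symmetric positive definite solution of $P\mathcal{M}+\mathcal{M}^TP=-2\mu I_n$. Then $$\bar{\sigma}(P)\,\bar{\sigma}(\mathcal{M})\le-\mu \quad\text{and}\quad \bar{\sigma}(P)\,\bar{\sigma}(\mathcal{M}+\mathcal{M}^* )\ge -2\mu.$$ In particular, if $\mathcal{M}$ is Hermitian (i.e. symmetric), then $\bar{\sigma}(P)\,\bar{\sigma}(\mathcal{M})=-\mu$.
   Context: $\bar{\sigma}(X)$ denotes the maximum real part of the eigenvalues of a square matrix $X$ (for a Hermitian matrix, its largest eigenvalue). $\mathcal{M}^*$ is the conjugate transpose of $\mathcal{M}$ (here equal to $\mathcal{M}^T$). A matrix is Hurwitz if all its eigenvalues have negative real part. *)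

From HB Require Import structures.
From mathcomp Require Import all_boot all_order all_algebra.
From mathcomp Require Import complex.
Set Implicit Arguments. Unset Strict Implicit. Unset Printing Implicit Defensive.
Import Order.TTheory GRing.Theory Num.Theory.
Local Open Scope ring_scope.
Local Open Scope complex_scope.

Definition cplx_mx (R : rcfType) (n : nat) (X : 'M[R]_n) : 'M[R[i]]_n :=
  map_mx (fun x => x%:C) X.

Definition ceig (R : rcfType) (n : nat) (X : 'M[R]_n) (lam : R[i]) : bool :=
  eigenvalue (cplx_mx X) lam.

Definition hurwitz (R : rcfType) (n : nat) (X : 'M[R]_n) : Prop :=
  forall lam : R[i], ceig X lam -> complex.Re lam < 0.

Definition is_sigma_bar (R : rcfType) (n : nat) (X : 'M[R]_n) (s : R) : Prop :=
  (exists2 lam : R[i], ceig X lam & complex.Re lam = s) /\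
  (forall lam : R[i], ceig X lam -> complex.Re lam <= s).

Definition sym_posdef (R : rcfType) (n : nat) (P : 'M[R]_n) : Prop :=
  P^T = P /\ (forall x : 'cV[R]_n, x != 0 -> 0 < (x^T *m P *m x) 0 0).

(* Test the Lyapunov equation P M + M^T P = -2 mu I against complex vectors x and
   use the Rayleigh bound x^* H x <= sigma_bar(H) |x|^2 for Hermitian H.  For an
   eigenvector x of M with eigenvalue lam the left side is 2 Re(lam) x^* P x, so
   sigma_bar(P) Re(lam) <= -mu as Re(lam) < 0; in particular sigma_bar(P) > 0.  For an
   eigenvector x of P with (real) eigenvalue lam it is lam x^* (M + M^T) x, so
   lam sigma_bar(M + M^T) >= -2 mu.  For symmetric M every eigenvalue of M + M^T
   is twice one of M, so the two bounds meet. *)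
From mathcomp Require Import all_boot all_order all_algebra.
From mathcomp Require Import complex sesquilinear spectral ring lra.
Set Implicit Arguments. Unset Strict Implicit. Unset Printing Implicit Defensive.
Import Order.TTheory GRing.Theory Num.Theory.
Local Open Scope ring_scope.
Local Open Scope sesquilinear_scope.
Local Open Scope complex_scope.

Lemma char_poly_trmx (F : fieldType) n (A : 'M[F]_n) : char_poly A^T = char_poly A.
Proof.
rewrite /char_poly -det_tr; congr (\det _).
by apply/matrixP => i j; rewrite !mxE eq_sym.
Qed.

Lemma eigenvalue_trmx (F : fieldType) n (A : 'M[F]_n) a :
  eigenvalue A^T a = eigenvalue A a.
Proof. by rewrite !eigenvalue_root_char char_poly_trmx. Qed.

Lemma eigenvalueZ (F : fieldType) n (A : 'M[F]_n) c a : c != 0 ->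
  eigenvalue (c *: A) (c * a) = eigenvalue A a.
Proof.
move=> c_neq0; apply/eigenvalueP/eigenvalueP => -[v vA v_neq0]; exists v => //.
  by apply: (scalerI c_neq0); rewrite scalerA -vA scalemxAr.
by rewrite -scalemxAr vA scalerA.
Qed.

Section ComplexForms.
Variable R : rcfType.

Lemma Re_mul_conj_le (w d : R[i]) (s : R) : complex.Re d <= s ->
  complex.Re (w * d * w^* ) <= s * complex.Re (w * w^* ).
Proof.
case: w => a b; case: d => c e /= c_le_s.
have -> : (a * c - b * e) * a - (a * e + b * c) * - b = c * (a * a + b * b) by ring.
have -> : a * a - b * - b = a * a + b * b by ring.
by rewrite ler_wpM2r // addr_ge0 // -expr2 sqr_ge0.
Qed.

Lemma Re_add_conj_mul (z q : R[i]) :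
  complex.Re ((z + z^* ) * q) = 2 * complex.Re z * complex.Re q.
Proof. by case: z => a b; case: q => c e /=; ring. Qed.

Lemma Re_real_mul (r : R) (z : R[i]) : complex.Re (r%:C * z) = r * complex.Re z.
Proof. by case: z => a b /=; rewrite mul0r subr0. Qed.

Lemma Re_dotmx_gt0 n (v : 'rV[R[i]]_n) : v != 0 -> 0 < complex.Re ((v *m v^t* ) 0 0).
Proof.
move=> /dotmx_is_dotmx; rewrite dotmxE.
by case: ((v *m v^t* ) 0 0) => a b; rewrite ltcE /= => /andP[].
Qed.

Lemma normalmx_Re_form_le n (A : 'M[R[i]]_n) (s : R) :
  A \is normalmx -> (forall a, eigenvalue A a -> complex.Re a <= s) ->
  forall v : 'rV_n,
    complex.Re ((v *m A *m v^t* ) 0 0) <= s * complex.Re ((v *m v^t* ) 0 0).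
Proof.
move=> /orthomx_spectralP; set U := spectralmx A; set d := spectral_diag A.
move=> A_diag eigA_le v.
have U_unitary : U \is unitarymx := spectral_unitarymx A.
rewrite invmx_unitary // in A_diag.
set w := v *m U^t*.
have wC : w^t* = U *m v^t* by rewrite /w trmx_mul map_mxM trmxCK.
have -> : v *m A *m v^t* = w *m diag_mx d *m w^t* by rewrite wC A_diag /w !mulmxA.
have -> : v *m v^t* = w *m w^t* by rewrite wC /w mulmxA mulmxKtV.
rewrite mul_mx_diag !mxE !raddf_sum mulr_sumr; apply: ler_sum => j _.
rewrite !mxE; apply: Re_mul_conj_le; apply: eigA_le.
apply/eigenvalueP; exists (row j U).
  rewrite A_diag !mulmxA -row_mul -(row_mul j (U *m U^t* )).
  by rewrite (unitarymxP U_unitary) mul1mx row_diag_mx -scalemxAl -rowE.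
apply/eqP => Uj0; have := (row_unitarymxP U_unitary) j j.
by rewrite Uj0 eqxx dotmxE mul0mx mxE => /eqP; rewrite eq_sym oner_eq0.
Qed.

Lemma trmxC_eigen n (A : 'M[R[i]]_n) (v : 'rV_n) a :
  v *m A = a *: v -> A^t* *m v^t* = a^* *: v^t*.
Proof. by move=> vA; rewrite -map_mxM -trmx_mul vA linearZ /= map_mxZ. Qed.

Lemma hermitian_eigenvalue_real n (A : 'M[R[i]]_n) a :
  A^t* = A -> eigenvalue A a -> a = (complex.Re a)%:C.
Proof.
move=> A_herm /eigenvalueP[v vA v_neq0].
have AvC := trmxC_eigen vA; rewrite A_herm in AvC.
have nv_neq0 : (v *m v^t* ) 0 0 != 0.
  by move: (Re_dotmx_gt0 v_neq0); apply: contraTneq => ->; rewrite ltxx.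
have a_conj : a = a^*.
  apply: (mulIf nv_neq0).
  have := erefl ((v *m A *m v^t* ) 0 0).
  by rewrite {1}vA -mulmxA AvC -scalemxAl -scalemxAr !mxE.
by move: a_conj; case: a vA AvC => x y _ _ /= [] y_eq; congr Complex; lra.
Qed.

Lemma lyap_form_left_eigen n (A Q : 'M[R[i]]_n) (v : 'rV_n) l :
  v *m A^t* = l *: v ->
  v *m (A^t* *m Q + Q *m A) *m v^t* = (l + l^* ) *: (v *m Q *m v^t* ).
Proof.
move=> vA; have := trmxC_eigen vA; rewrite trmxCK => Av.
rewrite mulmxDr mulmxDl scalerDl mulmxA vA -!scalemxAl; congr (_ + _).
by rewrite -!mulmxA Av !scalemxAr.
Qed.

Lemma lyap_form_real_eigen n (A Q : 'M[R[i]]_n) (v : 'rV_n) (r : R) :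
  Q^t* = Q -> v *m Q = r%:C *: v ->
  v *m (A^t* *m Q + Q *m A) *m v^t* = r%:C *: (v *m (A^t* + A) *m v^t* ).
Proof.
move=> Q_herm vQ; have := trmxC_eigen vQ.
rewrite Q_herm (conjc_real r : (r%:C)^*%R = r%:C) => Qv.
rewrite !mulmxDr !mulmxDl scalerDr; congr (_ + _).
  by rewrite -!mulmxA Qv !scalemxAr.
by rewrite !mulmxA vQ -!scalemxAl.
Qed.

End ComplexForms.

Lemma cplx_mxE (R : rcfType) n (X : 'M[R]_n) : cplx_mx X = X ^ real_complex R.
Proof. by []. Qed.

Lemma cplx_mxD (R : rcfType) n (X Y : 'M[R]_n) :
  cplx_mx (X + Y) = cplx_mx X + cplx_mx Y.
Proof. exact: map_mxD. Qed.

Lemma cplx_mx_tr (R : rcfType) n (X : 'M[R]_n) : cplx_mx X^T = (cplx_mx X)^T.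
Proof. by apply/matrixP => i j; rewrite !mxE. Qed.

Lemma cplx_mx_trC (R : rcfType) n (X : 'M[R]_n) : (cplx_mx X)^t* = cplx_mx X^T.
Proof. by apply/matrixP => i j; rewrite !mxE; apply: conjc_real. Qed.

Lemma sym_Re_form_le (R : rcfType) n (X : 'M[R]_n) (s : R) :
  X^T = X -> (forall a, ceig X a -> complex.Re a <= s) ->
  forall v : 'rV_n, complex.Re ((v *m cplx_mx X *m v^t* ) 0 0)
                    <= s * complex.Re ((v *m v^t* ) 0 0).
Proof.
move=> X_sym; apply: normalmx_Re_form_le.
by apply/normalmxP; rewrite cplx_mx_trC X_sym.
Qed.

Lemma ceig_addmx_self (R : rcfType) n (X : 'M[R]_n) a :
  ceig (X + X) (2 * a) = ceig X a.
Proof.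
have two_neq0 : (2 : R[i]) != 0 by rewrite pnatr_eq0.
rewrite /ceig -[RHS](eigenvalueZ _ _ two_neq0).
by rewrite scaler_nat mulr2n cplx_mxD.
Qed.

Lemma ceig_addmx_self_Re_le (R : rcfType) n (X : 'M[R]_n) (s : R) :
  (forall a, ceig X a -> complex.Re a <= s) ->
  forall a, ceig (X + X) a -> complex.Re a <= 2 * s.
Proof.
move=> X_le a; have two_neq0 : (2 : R[i]) != 0 by rewrite pnatr_eq0.
rewrite -[a](mulVKf two_neq0); set b := _ * a.
rewrite ceig_addmx_self => /X_le b_le.
by rewrite [2 * b]mulr_natl raddfMn mulr2n; lra.
Qed.

Section Lyapunov.
Variables (R : rcfType) (n : nat) (M P : 'M[R]_n) (mu : R).
Hypotheses (P_sym : P^T = P) (lyapMP : P *m M + M^T *m P = - (2 * mu)%:M).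
Local Notation Mc := (cplx_mx M).
Local Notation Pc := (cplx_mx P).

Lemma lyap_cplx_form (v : 'rV_n) :
  (v *m (Mc^t* *m Pc + Pc *m Mc) *m v^t* ) 0 0
    = (- (2 * mu))%:C * (v *m v^t* ) 0 0.
Proof.
have -> : Mc^t* *m Pc + Pc *m Mc = cplx_mx (- (2 * mu)%:M).
  by rewrite cplx_mx_trC -lyapMP addrC [cplx_mx (_ + _)]cplx_mxE map_mxD !map_mxM.
rewrite [cplx_mx _]cplx_mxE map_mxN map_scalar_mx mulmxN mulNmx mul_mx_scalar.
by rewrite -scalemxAl !mxE -mulNr -rmorphN.
Qed.

Lemma lyap_Re_eig_mul_le (sP : R) lam :
  (forall a, ceig P a -> complex.Re a <= sP) ->
  ceig M lam -> complex.Re lam <= 0 -> sP * complex.Re lam <= - mu.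
Proof.
(* eigenvalueP yields left (row) eigenvectors, hence the passage to Mc^t* = Mc^T. *)
move=> P_le; rewrite /ceig -eigenvalue_trmx -cplx_mx_tr -cplx_mx_trC.
move=> /eigenvalueP[v vM v_neq0] lam_le0.
have := lyap_cplx_form v; rewrite (lyap_form_left_eigen _ vM) mxE.
move=> /(congr1 (@complex.Re R)); rewrite Re_add_conj_mul Re_real_mul => lyap_eq.
have N_gt0 := Re_dotmx_gt0 v_neq0.
have := sym_Re_form_le P_sym P_le v.
set N := complex.Re ((v *m v^t* ) 0 0) in lyap_eq N_gt0 *.
set q := complex.Re _ in lyap_eq * => q_le.
by rewrite -(ler_pM2r N_gt0); nra.
Qed.

Lemma lyap_Re_eig_mul_ge (s : R) lam :
  (forall a, ceig (M + M^T) a -> complex.Re a <= s) ->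
  ceig P lam -> 0 <= complex.Re lam -> - (2 * mu) <= complex.Re lam * s.
Proof.
move=> S_le Plam lam_ge0.
have Pc_herm : Pc^t* = Pc by rewrite cplx_mx_trC P_sym.
have lam_real := hermitian_eigenvalue_real Pc_herm Plam.
move: Plam => /eigenvalueP[v]; rewrite lam_real => vP v_neq0.
have := lyap_cplx_form v; rewrite (lyap_form_real_eigen _ Pc_herm vP) mxE.
rewrite cplx_mx_trC addrC -cplx_mxD.
move=> /(congr1 (@complex.Re R)); rewrite !Re_real_mul => lyap_eq.
have S_sym : (M + M^T)^T = M + M^T by rewrite linearD /= trmxK addrC.
have N_gt0 := Re_dotmx_gt0 v_neq0.
have := sym_Re_form_le S_sym S_le v.
set N := complex.Re ((v *m v^t* ) 0 0) in lyap_eq N_gt0 *.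
set q := complex.Re _ in lyap_eq * => q_le.
by rewrite -(ler_pM2r N_gt0); nra.
Qed.

End Lyapunov.

Theorem lemma5 (R : rcfType) (n : nat) (M P : 'M[R]_n) (mu : R) :
  hurwitz M -> 0 < mu ->
  sym_posdef P -> P *m M + M^T *m P = - ((2 * mu)%:M) ->
  forall sP sM sMM : R,
    is_sigma_bar P sP -> is_sigma_bar M sM -> is_sigma_bar (M + M^T) sMM ->
    [/\ sP * sM <= - mu,
        sP * sMM >= - (2 * mu)
      & M^T = M -> sP * sM = - mu].
Proof.
move=> M_hurwitz mu_gt0 [P_sym _] lyapMP sP sM sMM.
move=> [[lP Plp <-] P_le] [[lM MlM <-] M_le] [[lS SlS <-] S_le].
have lM_lt0 : complex.Re lM < 0 := M_hurwitz lM MlM.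
have PM_le := lyap_Re_eig_mul_le P_sym lyapMP P_le MlM (ltW lM_lt0).
have lP_gt0 : 0 < complex.Re lP by nra.
have PS_ge := lyap_Re_eig_mul_ge P_sym lyapMP S_le Plp (ltW lP_gt0).
split=> // M_sym.
have S_le_M : complex.Re lS <= 2 * complex.Re lM.
  by apply: (ceig_addmx_self_Re_le M_le); rewrite M_sym in SlS.
by apply/eqP; rewrite eq_le PM_le /=; nra.
Qed.
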